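(* Let $n\ge3$ and $\lambda\ge1$ be integers and let $X=\langle a,z\rangle$ be as below. Then $\mathrm{RotaMap}(X,a,z)$ is an $X$-rotary embedding of $\mathbf Q_n^{(\lambda)}$ with valency $n$, edge-multiplicity $\lambda$ and face-length $2n\lambda/\gcd(2,\lambda)$, and its face boundary cycles are regular cycles whose edge-induced subgraphs are $\mathbf C_{2n}^{(\lambda/\gcd(2,\lambda))}$.
   Context: $X=N\rtimes\langle a\rangle$ where $N=\langle v_0,\dots,v_{n-1}\rangle\cong\mathbb Z_2^n$ is elementary abelian with basis $v_i$, $|a|=n\lambda$, $v_i^a=v_{i+1}$ (indices mod $n$), and $z=v_0$; $(a,z)$ is a rotary pair for $X$ (i.e. $X=\langle a,z\rangle$, $|a|$ finite, $|z|=2$, $z\notin\langle a\rangle$). $\mathrm{RotaMap}(X,a,z)$: vertices the right cosets of $\langle a\rangle$, edges the right cosets of $\langle z\rangle$, faces the right cosets of $\langle az\rangle$, incidence by non-empty intersection, the face $\langle az\rangle g$ having boundary cycle $(\langle z\rangle(az)^i)_{0\le i<|az|}\,g$, surface obtained by gluing discs along these cycles. $X$-rotary: $X$ arc-transitive and vertex and face stabilisers induce cyclic groups on the incident edges. $\mathbf Q_n^{(\lambda)}$: $n$-cube with every edge replaced by $\lambda$ parallel edges; $\mathbf C_r^{(\mu)}$: simple $r$-cycle with every edge replaced by $\mu$ parallel edges. A cycle is regular if its vertex sequence is periodic with period equal to the number of distinct vertices. *)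

From HB Require Import structures.
From mathcomp Require Import all_boot all_fingroup all_solvable.

Set Implicit Arguments.
Unset Strict Implicit.
Unset Printing Implicit Defensive.

Local Open Scope group_scope.

Definition mg_iso (V1 E1 V2 E2 : finType)
  (VS1 : {set V1}) (ES1 : {set E1}) (inc1 : V1 -> E1 -> bool)
  (VS2 : {set V2}) (ES2 : {set E2}) (inc2 : V2 -> E2 -> bool) : Prop :=
  exists (f : V1 -> V2) (g : E1 -> E2),
    [/\ {in VS1 &, injective f}, f @: VS1 = VS2,
        {in ES1 &, injective g}, g @: ES1 = ES2 &
        {in VS1 & ES1, forall v e, inc2 (f v) (g e) = inc1 v e}].

(* Q_n^(lam): vertices are 0/1-vectors of length n; the edge (u, i, j) with
   u i = false joins u and u + e_i; j < lam indexes the lam parallel copies. *)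
Definition cube_flip n (u : {ffun 'I_n -> bool}) (i : 'I_n) : {ffun 'I_n -> bool} :=
  [ffun k => if k == i then ~~ u k else u k].

Definition cubeQ_edges n lam : {set ({ffun 'I_n -> bool} * 'I_n * 'I_lam)} :=
  [set e : {ffun 'I_n -> bool} * 'I_n * 'I_lam | ~~ e.1.1 e.1.2].

Definition cubeQ_inc n lam (v : {ffun 'I_n -> bool})
  (e : {ffun 'I_n -> bool} * 'I_n * 'I_lam) : bool :=
  (v == e.1.1) || (v == cube_flip e.1.1 e.1.2).

(* C_r^(mu): vertices 'I_r, the edge (i, j) joins i and i+1 mod r,
   j < mu indexes the mu parallel copies. *)
Definition cycleC_inc r mu (v : 'I_r) (e : 'I_r * 'I_mu) : bool :=
  (val v == val e.1) || (val v == (val e.1).+1 %% r).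

Section RotaMap.
Variable gT : finGroupType.
Implicit Types (X : {set gT}) (a z g : gT).

Definition rm_vertices X a := rcosets <[a]> X.
Definition rm_edges X z := rcosets <[z]> X.
Definition rm_faces X a z := rcosets <[a * z]> X.

Definition rm_inc (A B : {set gT}) : bool := A :&: B != set0.

Definition face_edge_seq a z g : seq {set gT} :=
  [seq <[z]> :* ((a * z) ^+ i * g) | i <- iota 0 #[a * z]].
Definition face_vertex_seq a z g : seq {set gT} :=
  [seq <[a]> :* ((a * z) ^+ i * g) | i <- iota 0 #[a * z]].

Definition rm_arcs X a z : {set {set gT} * {set gT}} :=
  [set p | [&& p.1 \in rm_vertices X a, p.2 \in rm_edges X z & rm_inc p.1 p.2]].

Definition rm_arc_transitive X a z : Prop :=
  {in rm_arcs X a z &, forall p q,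
     exists2 x, x \in X & q = (p.1 :* x, p.2 :* x)}.

Definition induces_cyclic_on_edges X z (C : {set gT}) : Prop :=
  let St := [set x in X | C :* x == C] in
  let I := [set E in rm_edges X z | rm_inc C E] in
  exists2 y, y \in St &
    forall x, x \in St -> exists k, {in I, forall E, E :* x = E :* (y ^+ k)}.

Definition rm_X_rotary X a z : Prop :=
  [/\ rm_arc_transitive X a z,
      {in rm_vertices X a, forall V, induces_cyclic_on_edges X z V} &
      {in rm_faces X a z, forall F, induces_cyclic_on_edges X z F}].

Definition rm_neighbours X a z (V : {set gT}) : {set {set gT}} :=
  [set W in rm_vertices X a | (W != V) &&
     [exists E in rm_edges X z, rm_inc V E && rm_inc W E]].

Definition rm_mult X z (V W : {set gT}) : nat :=
  #|[set E in rm_edges X z | rm_inc V E && rm_inc W E]|.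

End RotaMap.

Definition regular_seq (T : eqType) (s : seq T) : bool :=
  let d := size (undup s) in s == flatten (nseq (size s %/ d) (take d s)).

(* Write X = <a> N with N elementary abelian, so that every g in X is a^k w with
   w in N.  The vertices <a>w are indexed by N, which the basis v_i = z^(a^i)
   identifies with {0,1}^n, and since z a^k = a^k v_k the edge <z>a^k w joins
   <a>w to <a>v_k w: it is one of the lam parallel copies (indexed by k div n)
   of the cube edge in direction k mod n.  Moreover (az)^m = a^m v_(m-1)...v_0,
   and the N-part has coordinates odd(m div n) + [j < m mod n], hence period
   exactly 2n.  So |az| = lcm(n lam, 2n), and each face boundary runs
   lam/gcd(2,lam) times around a 2n-cycle. *)

From HB Require Import structures.
From mathcomp Require Import all_boot all_fingroup all_solvable zify.

Set Implicit Arguments.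
Unset Strict Implicit.
Unset Printing Implicit Defensive.
Local Open Scope group_scope.

Section InjectiveInverse.
Variables (T1 T2 : finType) (S : {set T1}) (f : T1 -> T2) (x0 : T1).
Hypothesis f_inj : {in S &, injective f}.

Definition inv_in (y : T2) : T1 := odflt x0 [pick x in S | f x == y].

Lemma inv_inP y : y \in f @: S -> inv_in y \in S /\ f (inv_in y) = y.
Proof.
case/imsetP=> x xS ->; rewrite /inv_in; case: pickP => [x' /andP[x'S /eqP]//|/(_ x)].
by rewrite xS eqxx.
Qed.

Lemma inv_inK x : x \in S -> inv_in (f x) = x.
Proof. by move=> xS; have [x'S /f_inj->] := inv_inP (imset_f f xS). Qed.

Lemma inv_in_inj : {in f @: S &, injective inv_in}.
Proof.
by move=> y y' /inv_inP[_ fy] /inv_inP[_ fy'] Ey; rewrite -fy -fy' Ey.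
Qed.

Lemma inv_in_image : inv_in @: (f @: S) = S.
Proof.
apply/setP=> x; apply/imsetP/idP => [[y /inv_inP[yS _] ->] //|xS].
by exists (f x); rewrite ?imset_f ?inv_inK.
Qed.

End InjectiveInverse.

Lemma mg_iso_sym (V1 E1 V2 E2 : finType) (VS1 : {set V1}) (ES1 : {set E1}) inc1
    (VS2 : {set V2}) (ES2 : {set E2}) inc2 (v0 : V1) (e0 : E1) :
  mg_iso VS1 ES1 inc1 VS2 ES2 inc2 -> mg_iso VS2 ES2 inc2 VS1 ES1 inc1.
Proof.
case=> f [g [f_inj <- g_inj <- f_inc]].
exists (inv_in VS1 f v0), (inv_in ES1 g e0); split; rewrite ?inv_in_image //.
- exact: inv_in_inj.
- exact: inv_in_inj.
move=> y e /(inv_inP v0)[x1 fx1] /(inv_inP e0)[e1 ge1].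
by rewrite -f_inc // fx1 ge1.
Qed.

Lemma mem_flatten_nseq (T : eqType) (s : seq T) t x : (0 < t)%N ->
  (x \in flatten (nseq t s)) = (x \in s).
Proof.
elim: t => [//|[|t] IHt] _ /=; first by rewrite cats0.
by rewrite mem_cat IHt // orbb.
Qed.

Lemma map_iota_periodic (T : Type) (f : nat -> T) p t : (forall i, f (i + p) = f i) ->
  map f (iota 0 (p * t)) = flatten (nseq t (map f (iota 0 p))).
Proof.
move=> fp; elim: t => [|t IHt]; first by rewrite muln0.
rewrite mulnS iotaD map_cat /= -IHt add0n -(addn0 p) iotaDl addn0 -map_comp.
by congr (_ ++ _); apply: eq_map => i /=; rewrite addnC fp.
Qed.

Lemma regular_seq_periodic (T : eqType) (f : nat -> T) p t : (0 < p)%N -> (0 < t)%N ->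
  (forall i, f (i + p) = f i) -> uniq (map f (iota 0 p)) ->
  regular_seq (map f (iota 0 (p * t))).
Proof.
move=> p_gt0 t_gt0 fp f_uniq; rewrite /regular_seq map_iota_periodic //.
set s := map f (iota 0 p).
have size_s : size s = p by rewrite size_map size_iota.
have -> : size (undup (flatten (nseq t s))) = p.
  rewrite -size_s; apply/perm_size/uniq_perm; rewrite ?undup_uniq // => x.
  by rewrite mem_undup mem_flatten_nseq.
rewrite size_flatten /shape map_nseq size_s sumn_nseq mulKn //.
by case: t t_gt0 => // t _ /=; rewrite take_size_cat.
Qed.

Section MixedRadix.
Variables d t : nat.
Implicit Types (i : 'I_d) (j : 'I_t).

Lemma add_mul_ord_lt i j : (i + d * j < d * t)%N.
Proof.
by apply: leq_trans (_ : d + d * j <= _)%N; rewrite ?ltn_add2r // -mulnS leq_mul2l ltn_ord orbT.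
Qed.

Lemma add_mul_ord_modn i (j : nat) : ((i + d * j) %% d = i)%N.
Proof. by rewrite addnC mulnC modnMDl modn_small. Qed.

Lemma add_mul_ord_divn i (j : nat) : ((i + d * j) %/ d = j)%N.
Proof.
have d_gt0 : (0 < d)%N by case: d i => [[]|].
by rewrite addnC mulnC divnMDl // divn_small // addn0.
Qed.

Lemma add_mul_ord_inj i j i' j' : (i + d * j = i' + d * j')%N -> i = i' /\ j = j'.
Proof.
move=> E; split; apply: val_inj.
  by rewrite /= -(add_mul_ord_modn i j) E add_mul_ord_modn.
by rewrite /= -(add_mul_ord_divn i j) E add_mul_ord_divn.
Qed.

Lemma add_mul_ordP k : (k < d * t)%N -> exists i j, k = (i + d * j)%N.
Proof.
move=> lt_k; have d_gt0 : (0 < d)%N by case: d lt_k.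
have lt_r : (k %% d < d)%N by rewrite ltn_pmod.
have lt_q : (k %/ d < t)%N by rewrite ltn_divLR // mulnC.
by exists (Ordinal lt_r), (Ordinal lt_q); rewrite /= addnC mulnC -divn_eq.
Qed.

End MixedRadix.

Lemma modn_mul2 d m : m %% (2 * d) = (odd (m %/ d) * d + m %% d)%N.
Proof.
have [->|d_gt0] := posnP d; first by rewrite muln0 !modn0.
rewrite {1}(divn_eq m d) {1}(divn_eq (m %/ d) 2) modn2 mulnDl -mulnA -addnA modnMDl.
rewrite modn_small //; have := ltn_pmod m d_gt0; case: (odd _); lia.
Qed.

Lemma lcmn_mul_mul2 n l : lcmn (n * l) (2 * n) = (2 * n * l %/ gcdn 2 l)%N.
Proof.
rewrite [(2 * n)%N]mulnC -muln_lcmr /lcmn muln_divA; last by rewrite dvdn_mulr // dvdn_gcdl.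
by rewrite gcdnC -mulnA (mulnC 2 l).
Qed.

Section CosetMapRotary.
Variables (gT : finGroupType) (X : {group gT}) (a z : gT).
Hypotheses (aX : a \in X) (zX : z \in X).

Lemma rcoset_cycle_induces_cyclic c g : c \in X -> g \in X ->
  induces_cyclic_on_edges X z (<[c]> :* g).
Proof.
move=> cX gX; exists (c ^ g).
  rewrite inE groupJ //= -rcosetM conjgE !mulgA mulgV mul1g rcosetM.
  by rewrite rcoset_id ?cycle_id.
move=> x; rewrite inE => /andP[xX /eqP].
rewrite -rcosetM => /rcoset_eqP; rewrite mem_rcoset => /cycleP[k Ek].
exists k => E _; congr (_ :* _).
by rewrite -conjXg conjgE -Ek !mulgA mulVg mul1g mulgVK.
Qed.

Lemma rcoset_of_mem (H : {group gT}) A x : A \in rcosets H X -> x \in A -> A = H :* x.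
Proof. by case/rcosetsP=> g _ -> xA; apply/esym/rcoset_eqP. Qed.

Lemma rm_arc_transitive_rcosets : rm_arc_transitive X a z.
Proof.
move=> [V1 E1] [V2 E2]; rewrite !inE /= => /and3P[V1v E1e /set0Pn[x1 x1VE]].
case/and3P=> V2v E2e /set0Pn[x2 x2VE]; move: x1VE x2VE; rewrite !inE.
case/andP=> x1V x1E /andP[x2V x2E].
have mem_X x V : V \in rm_vertices X a -> x \in V -> x \in X.
  case/rcosetsP=> g gX ->; rewrite mem_rcoset => xg_a.
  by rewrite -(mulgKV g x) groupM // (subsetP _ _ xg_a) ?cycle_subG.
exists (x1^-1 * x2); first by rewrite groupM ?groupV ?(mem_X x1 V1) ?(mem_X x2 V2).
rewrite (rcoset_of_mem V1v x1V) (rcoset_of_mem E1e x1E).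
by rewrite (rcoset_of_mem V2v x2V) (rcoset_of_mem E2e x2E) -!rcosetM mulKVg.
Qed.

Lemma rm_X_rotary_rcosets : rm_X_rotary X a z.
Proof.
split; first exact: rm_arc_transitive_rcosets.
  by move=> V /rcosetsP[g gX ->]; apply: rcoset_cycle_induces_cyclic.
by move=> F /rcosetsP[g gX ->]; apply: rcoset_cycle_induces_cyclic; rewrite ?groupM.
Qed.

End CosetMapRotary.

Section CubeGroup.
Variables (gT : finGroupType) (n lam : nat) (X N : {group gT}) (a z : gT).
Hypotheses (n_ge3 : (3 <= n)%N) (lam_gt0 : (0 < lam)%N).
Hypotheses (defX : N ><| <[a]> = X) (abelN : 2.-abelem N).
Hypotheses (genN : N :=: <<[set z ^ (a ^+ i) | i : 'I_n]>>) (oN : #|N| = (2 ^ n)%N).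
Hypotheses (oa : #[a] = (n * lam)%N) (z_an : z ^ (a ^+ n) = z).

Local Notation K := <[a]>.
Local Notation Z := <[z]>.

Definition v k := z ^ (a ^+ k).

Lemma n_gt0 : (0 < n)%N. Proof. exact: leq_trans n_ge3. Qed.

Lemma sNX : N \subset X.
Proof. by have [/andP[]] := sdprod_context defX. Qed.

Lemma aX : a \in X.
Proof. by have [_ sKX _ _ _] := sdprod_context defX; rewrite -cycle_subG. Qed.

Lemma expa_norm k : a ^+ k \in 'N(N).
Proof.
have [/andP[_ nNX] _ _ _ _] := sdprod_context defX.
by rewrite groupX // (subsetP nNX) ?aX.
Qed.

Lemma mulNN x : x \in N -> x * x = 1.
Proof. by case/abelemP: abelN => // _ /[apply]; rewrite expgS expg1. Qed.

Lemma commN x y : x \in N -> y \in N -> x * y = y * x.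
Proof. by case/abelemP: abelN => // /centsP cNN _ xN yN; apply: cNN. Qed.

Lemma zN : z \in N.
Proof. by rewrite genN mem_gen //; apply/imsetP; exists (Ordinal n_gt0); rewrite ?conjg1. Qed.

Lemma zX : z \in X. Proof. exact: subsetP sNX _ zN. Qed.

Lemma vN k : v k \in N. Proof. by rewrite memJ_norm ?zN ?expa_norm. Qed.

Lemma vN_mul k w : w \in N -> v k * w \in N. Proof. by move=> wN; rewrite groupM ?vN. Qed.

Lemma v_modn k : v k = v (k %% n).
Proof.
have v_mul q : z ^ (a ^+ (n * q)) = z.
  by elim: q => [|q IHq]; rewrite ?muln0 ?conjg1 // mulnS expgD conjgM z_an.
by rewrite /v {1}(divn_eq k n) mulnC expgD conjgM v_mul.
Qed.

Lemma mulvK k w : v k * (v k * w) = w.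
Proof. by rewrite mulgA mulNN ?vN ?mul1g. Qed.

Lemma z_expa k : z * a ^+ k = a ^+ k * v k.
Proof. exact: conjgC. Qed.

Lemma expa_mulN_inj k k' w w' : w \in N -> w' \in N ->
  a ^+ k * w = a ^+ k' * w' -> a ^+ k = a ^+ k' /\ w = w'.
Proof.
move=> wN w'N E; have [_ _ _ _ tiNK] := sdprod_context defX.
have Ea : (a ^+ k')^-1 * a ^+ k = w' * w^-1.
  by apply: (canRL (mulgK w)); rewrite -mulgA E mulKg.
have Ew : w' * w^-1 = 1.
  by apply/set1gP; rewrite -tiNK inE groupM ?groupV //= -Ea groupM ?groupV ?mem_cycle.
split; first by apply: (mulgI (a ^+ k')^-1); rewrite Ea Ew mulVg.
by apply/esym/eqP; rewrite eq_mulgV1 Ew.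
Qed.

Lemma mem_X_decomp g : g \in X ->
  exists k w, [/\ (k < n * lam)%N, w \in N & g = a ^+ k * w].
Proof.
have [_ _ defNK nNK _] := sdprod_context defX.
rewrite -defNK -(normC nNK) => /mulsgP[_ w /cycleP[i ->] wN ->].
exists (i %% #[a])%N, w; rewrite expg_mod_order -oa ltn_pmod ?order_gt0 //.
Qed.

Lemma mem_cycle_z y : (y \in Z) = (y == 1) || (y == z).
Proof.
apply/idP/orP => [/cycleP[i ->]|[]/eqP->]; rewrite ?group1 ?cycle_id //.
elim: i => [|i]; rewrite ?expg0 ?eqxx; [by left | rewrite expgS].
by case=> /eqP->; [right | left]; rewrite ?mulg1 ?mulNN ?zN.
Qed.

Lemma mem_zcoset x h : (x \in Z :* h) = (x == h) || (x == z * h).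
Proof. by rewrite mem_rcoset mem_cycle_z -eq_mulgV1 -[_ * _ == z](inj_eq (mulIg h)) mulgKV. Qed.

Lemma mem_Kcoset x w : (x \in K :* w) = [exists i : 'I_#[a], x == a ^+ i * w].
Proof.
rewrite mem_rcoset; apply/cycleP/existsP => [[i Ei]|[i /eqP->]]; last by exists i; rewrite mulgK.
by exists (Ordinal (ltn_pmod i (order_gt0 a))); rewrite /= expg_mod_order -Ei mulgKV.
Qed.

Lemma Kcoset_inj : {in N &, injective (fun w => K :* w)}.
Proof.
move=> w w' wN w'N Ew; have : w \in K :* w' by rewrite -Ew rcoset_refl.
rewrite mem_Kcoset => /existsP[i /eqP Ei].
by have [] := @expa_mulN_inj 0 i w w' wN w'N; rewrite ?mul1g.
Qed.

Lemma Kcoset_expa k w : K :* (a ^+ k * w) = K :* w.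
Proof. by rewrite rcosetM rcoset_id // mem_cycle. Qed.

Lemma zcoset_mulz h : Z :* (z * h) = Z :* h.
Proof. by rewrite rcosetM rcoset_id // cycle_id. Qed.

Lemma Kcoset_in w : w \in N -> K :* w \in rm_vertices X a.
Proof. by move=> wN; apply/rcosetsP; exists w; rewrite ?(subsetP sNX). Qed.

Lemma zcoset_in k w : w \in N -> Z :* (a ^+ k * w) \in rm_edges X z.
Proof.
by move=> wN; apply/rcosetsP; exists (a ^+ k * w); rewrite ?groupM ?groupX ?aX ?(subsetP sNX).
Qed.

Lemma vertexP V : V \in rm_vertices X a -> exists2 w, w \in N & V = K :* w.
Proof.
by case/rcosetsP=> g /mem_X_decomp[k [w [_ wN ->]]] ->; exists w; rewrite ?Kcoset_expa.
Qed.

Lemma edgeP E : E \in rm_edges X z ->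
  exists k w, [/\ (k < n * lam)%N, w \in N & E = Z :* (a ^+ k * w)].
Proof. by case/rcosetsP=> g /mem_X_decomp[k [w [lt_k wN ->]]] ->; exists k, w. Qed.

Lemma zcoset_eq k k' w w' : w \in N -> w' \in N ->
  Z :* (a ^+ k * w) = Z :* (a ^+ k' * w') ->
  a ^+ k = a ^+ k' /\ (w = w' \/ w = v k' * w').
Proof.
move=> wN w'N Ew; have : a ^+ k * w \in Z :* (a ^+ k' * w') by rewrite -Ew rcoset_refl.
rewrite mem_zcoset mulgA z_expa -mulgA.
case/orP=> /eqP/expa_mulN_inj[] //; rewrite ?vN_mul //.
- by move=> -> ->; split; [|left].
- by move=> -> ->; split; [|right].
Qed.

Lemma rm_inc_Kcoset_zcoset w0 k w : w0 \in N -> w \in N ->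
  rm_inc (K :* w0) (Z :* (a ^+ k * w)) = (w0 == w) || (w0 == v k * w).
Proof.
move=> w0N wN; apply/set0Pn/orP => [[x]|[]/eqP->].
- rewrite inE mem_zcoset mem_Kcoset => /andP[/existsP[i /eqP->]].
  rewrite mulgA z_expa -mulgA => /orP[]/eqP/expa_mulN_inj[] //; rewrite ?vN_mul //.
  + by move=> _ ->; left.
  + by move=> _ ->; right.
- by exists (a ^+ k * w); rewrite inE mem_zcoset eqxx mem_rcoset mulgK mem_cycle.
- exists (z * (a ^+ k * w)); rewrite inE mem_zcoset eqxx orbT mulgA z_expa -mulgA.
  by rewrite mem_rcoset mulgK mem_cycle.
Qed.

Fixpoint comb_seq (u : {ffun 'I_n -> bool}) (s : seq 'I_n) : gT :=
  if s is i :: s' then (if u i then v i * comb_seq u s' else comb_seq u s') else 1.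

Definition comb u := comb_seq u (enum 'I_n).

Lemma comb_seqN u s : comb_seq u s \in N.
Proof. by elim: s => [|i s IHs] /=; rewrite ?group1 //; case: (u i); rewrite ?vN_mul. Qed.

Lemma combN u : comb u \in N. Proof. exact: comb_seqN. Qed.

Lemma comb_seq_flip u i s : uniq s ->
  comb_seq (cube_flip u i) s = if i \in s then v i * comb_seq u s else comb_seq u s.
Proof.
elim: s => [|j s IHs] //= /andP[js /IHs->]; rewrite inE /cube_flip ffunE eq_sym.
have [<-|ij] /= := eqVneq j i; last first.
  by case: (i \in s) (u j) => [] []; rewrite // (mulgA (v j)) (mulgA (v i)) (commN (vN j) (vN i)).
by move: js; case: (j \in s) => // _; case: (u j); rewrite ?mulvK.
Qed.

Lemma comb_flip u i : comb (cube_flip u i) = v i * comb u.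
Proof. by rewrite /comb comb_seq_flip ?enum_uniq ?mem_enum. Qed.

Lemma comb0 : comb [ffun => false] = 1.
Proof. by rewrite /comb; elim: (enum 'I_n) => //= i s ->; rewrite ffunE. Qed.

Lemma comb_onto x : x \in N -> exists u, comb u = x.
Proof.
rewrite genN => /gen_prodgP[m [c c_gen ->]]; elim: m c c_gen => [|m IHm] c c_gen.
  by exists [ffun => false]; rewrite big_ord0 comb0.
rewrite big_ord_recl; have [|u <-] := IHm (fun i => c (lift ord0 i)) => [i|]; first exact: c_gen.
by have /imsetP[i _ ->] := c_gen ord0; exists (cube_flip u i); rewrite comb_flip.
Qed.

Lemma comb_inj : injective comb.
Proof.
have im_comb : comb @: setT = N.
  apply/setP=> x; apply/imsetP/idP => [[u _ ->]|/comb_onto[u <-]]; first exact: combN.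
  by exists u.
have /eqP/imset_injP comb_inj_in : #|comb @: setT| = #|[set: {ffun 'I_n -> bool}]|.
  by rewrite im_comb oN cardsT card_ffun card_bool card_ord.
by move=> u u' Eu; apply: comb_inj_in; rewrite ?inE.
Qed.

Lemma mulv_neq (i : 'I_n) w : w \in N -> v i * w != w.
Proof.
case/comb_onto=> u <-; rewrite -comb_flip (inj_eq comb_inj); apply/eqP => /ffunP/(_ i).
by rewrite ffunE eqxx; case: (u i).
Qed.

Lemma mulv_inj (i j : 'I_n) w : w \in N -> v i * w = v j * w -> i = j.
Proof.
case/comb_onto=> u <-; rewrite -!comb_flip => /comb_inj/ffunP/(_ i); rewrite !ffunE eqxx.
by case: eqP => [//|_]; case: (u i).
Qed.

Lemma v_add_mul (i : 'I_n) j : v (i + n * j) = v i.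
Proof. by rewrite v_modn add_mul_ord_modn. Qed.

Lemma expa_inj k k' : (k < n * lam)%N -> (k' < n * lam)%N -> a ^+ k = a ^+ k' -> k = k'.
Proof. by move=> lt_k lt_k' /eqP; rewrite eq_expg_mod_order oa !modn_small // => /eqP. Qed.

Lemma zcoset_expa_mulv k w : Z :* (a ^+ k * (v k * w)) = Z :* (a ^+ k * w).
Proof. by rewrite mulgA -z_expa -mulgA zcoset_mulz. Qed.

Definition cube_vertex u := K :* comb u.

Definition cube_edge (e : {ffun 'I_n -> bool} * 'I_n * 'I_lam) :=
  Z :* (a ^+ (e.1.2 + n * e.2) * comb e.1.1).

Lemma cube_vertex_inj : injective cube_vertex.
Proof. by move=> u u' /Kcoset_inj Eu; apply: comb_inj; apply: Eu; apply: combN. Qed.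

Lemma cube_vertex_image : cube_vertex @: setT = rm_vertices X a.
Proof.
apply/setP=> V; apply/imsetP/idP => [[u _ ->]|/vertexP[_ /comb_onto[u <-] ->]].
  exact/Kcoset_in/combN.
by exists u.
Qed.

Lemma cube_edge_inj : {in cubeQ_edges n lam &, injective cube_edge}.
Proof.
move=> [[u i] j] [[u' i'] j']; rewrite !inE /cube_edge /= => ui u'i'.
case/zcoset_eq; rewrite ?combN // => /expa_inj Eij.
have [/esym Ei /esym Ej] := add_mul_ord_inj (Eij (add_mul_ord_lt _ _) (add_mul_ord_lt _ _)).
subst i' j'; case=> [/comb_inj-> //|].
rewrite v_add_mul -comb_flip => /comb_inj Eu.
by move: ui; rewrite Eu ffunE eqxx u'i'.
Qed.

Lemma cube_edge_image : cube_edge @: cubeQ_edges n lam = rm_edges X z.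
Proof.
apply/setP=> E; apply/imsetP/idP => [[e _ ->]|]; first exact/zcoset_in/combN.
case/edgeP=> k [w [/add_mul_ordP[i [j ->]] /comb_onto[u <-] ->]].
have [ui|] := boolP (u i); last by exists (u, i, j); rewrite ?inE.
exists (cube_flip u i, i, j); first by rewrite inE /= ffunE eqxx ui.
by rewrite /cube_edge /= comb_flip -{1}(v_add_mul i j) zcoset_expa_mulv.
Qed.

Lemma cube_vertex_edge_inc u e :
  rm_inc (cube_vertex u) (cube_edge e) = cubeQ_inc u e.
Proof.
rewrite /cube_vertex /cube_edge rm_inc_Kcoset_zcoset ?combN //.
by rewrite v_add_mul -comb_flip !(inj_eq comb_inj).
Qed.

Lemma rm_iso_cube : mg_iso (rm_vertices X a) (rm_edges X z) (@rm_inc gT)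
  [set: {ffun 'I_n -> bool}] (cubeQ_edges n lam) (@cubeQ_inc n lam).
Proof.
apply: (mg_iso_sym [ffun => false] ([ffun => false], Ordinal n_gt0, Ordinal lam_gt0)).
exists cube_vertex, cube_edge; split.
- by move=> u u' _ _ /cube_vertex_inj.
- exact: cube_vertex_image.
- exact: cube_edge_inj.
- exact: cube_edge_image.
- by move=> u e _ _; apply: cube_vertex_edge_inc.
Qed.

Lemma rm_inc_join w0 w1 k w : w0 \in N -> w1 \in N -> w \in N -> w1 != w0 ->
  rm_inc (K :* w0) (Z :* (a ^+ k * w)) -> rm_inc (K :* w1) (Z :* (a ^+ k * w)) ->
  w1 = v k * w0 /\ Z :* (a ^+ k * w) = Z :* (a ^+ k * w0).
Proof.
move=> w0N w1N wN w10; rewrite !rm_inc_Kcoset_zcoset //.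
case/orP=> /eqP E0 /orP[]/eqP E1; rewrite E0 E1 ?eqxx in w10 * => //.
  by rewrite mulvK zcoset_expa_mulv.
Qed.

Lemma rm_neighbours_Kcoset w0 : w0 \in N ->
  rm_neighbours X a z (K :* w0) = [set K :* (v i * w0) | i : 'I_n].
Proof.
move=> w0N; apply/setP=> W; apply/idP/imsetP => [|[i _ ->]].
  rewrite inE => /and3P[/vertexP[w1 w1N ->] w10 /existsP[E /and3P[/edgeP[k [w [_ wN ->]]]]]].
  move=> inc0 inc1; have w1_neq_w0 : w1 != w0 by apply: contraNneq w10 => ->.
  have [-> _] := rm_inc_join w0N w1N wN w1_neq_w0 inc0 inc1.
  by exists (Ordinal (ltn_pmod k n_gt0)); rewrite //= -v_modn.
rewrite inE Kcoset_in ?vN_mul //=; apply/andP; split.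
  by apply: contra (mulv_neq i w0N) => /eqP/Kcoset_inj-> //; rewrite vN_mul.
apply/existsP; exists (Z :* (a ^+ i * w0)).
by rewrite zcoset_in // !rm_inc_Kcoset_zcoset ?vN_mul // !eqxx orbT.
Qed.

Lemma rm_valency : {in rm_vertices X a, forall V, #|rm_neighbours X a z V| = n}.
Proof.
move=> V /vertexP[w0 w0N ->]; rewrite rm_neighbours_Kcoset // card_imset ?card_ord //.
by move=> i j /Kcoset_inj/mulv_inj; apply; rewrite ?vN_mul.
Qed.

Lemma rm_mult_edges w0 (i : 'I_n) : w0 \in N ->
  [set E in rm_edges X z | rm_inc (K :* w0) E && rm_inc (K :* (v i * w0)) E]
  = [set Z :* (a ^+ (i + n * j) * w0) | j : 'I_lam].
Proof.
move=> w0N; apply/setP=> E; apply/idP/imsetP => [|[j _ ->]].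
  rewrite inE => /andP[/edgeP[k [w [/add_mul_ordP[i' [j ->]] wN ->]]] /andP[inc0 inc1]].
  have [Ev ->] := rm_inc_join w0N (vN_mul i w0N) wN (mulv_neq i w0N) inc0 inc1.
  by rewrite v_add_mul in Ev; rewrite (mulv_inj w0N Ev); exists j.
rewrite inE zcoset_in // !rm_inc_Kcoset_zcoset ?vN_mul //.
by rewrite v_add_mul !eqxx orbT.
Qed.

Lemma rm_edge_multiplicity : {in rm_vertices X a, forall V,
  {in rm_neighbours X a z V, forall W, rm_mult X z V W = lam}}.
Proof.
move=> V /vertexP[w0 w0N ->] W; rewrite rm_neighbours_Kcoset // => /imsetP[i _ ->].
rewrite /rm_mult rm_mult_edges // card_imset ?card_ord // => j j'.
case/zcoset_eq => // /expa_inj Eij _.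
by have [] := add_mul_ord_inj (Eij (add_mul_ord_lt _ _) (add_mul_ord_lt _ _)).
Qed.

Fixpoint azpart m : gT := if m is m'.+1 then v m' * azpart m' else 1.

Lemma expaz m : (a * z) ^+ m = a ^+ m * azpart m.
Proof.
elim: m => [|m IHm]; first by rewrite mulg1.
by rewrite expgS IHm /= -(mulgA a) (mulgA z) z_expa -!mulgA mulgA -expgS.
Qed.

Definition azpart_coords m : {ffun 'I_n -> bool} :=
  [ffun j : 'I_n => odd (m %/ n) (+) (j < m %% n)%N].

Lemma azpart_coordsS m :
  azpart_coords m.+1 = cube_flip (azpart_coords m) (Ordinal (ltn_pmod m n_gt0)).
Proof.
apply/ffunP=> j; rewrite !ffunE -val_eqE /= modnS (divnS _ n_gt0).
have lt_j := ltn_ord j; have lt_r := ltn_pmod m n_gt0.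
have [dvd_m1 | _] /= := boolP (n %| m.+1)%N.
  have Er : (m %% n).+1 = n.
    apply/eqP; rewrite eqn_leq lt_r dvdn_leq //.
    by rewrite -(dvdn_addr _ (dvdn_mull (m %/ n) (dvdnn n))) addnS -divn_eq.
  rewrite ltn0 addbF -[(j < _)%N]ltnS Er add0n; case: eqP => [->|/eqP ne_j].
    by rewrite Er ltnn addbF.
  by rewrite ltn_neqAle lt_j -[X in (_ != X)]Er eqSS ne_j addbT.
by rewrite ltnS leq_eqVlt add0n; case: eqP => [->|_] /=; rewrite ?ltnn ?addbT ?addbF.
Qed.

Lemma azpart_comb m : azpart m = comb (azpart_coords m).
Proof.
elim: m => [|m IHm] /=.
  by rewrite -comb0; congr comb; apply/ffunP=> j; rewrite !ffunE div0n mod0n.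
by rewrite azpart_coordsS comb_flip -IHm /= -v_modn.
Qed.

Lemma azpartN m : azpart m \in N. Proof. by rewrite azpart_comb combN. Qed.

Lemma azpart_coords_eq i j :
  (azpart_coords i == azpart_coords j) = (i %% (2 * n) == j %% (2 * n))%N.
Proof.
have lt_r m : (m %% n < n)%N := ltn_pmod m n_gt0.
rewrite !modn_mul2; apply/eqP/eqP => Eij; last first.
  have := congr1 (modn^~ n) Eij; rewrite /= modnMDl [RHS]modnMDl !modn_mod => Er.
  move/eqP: Eij; rewrite Er eqn_add2r (eqn_pmul2r n_gt0) => /eqP Eq.
  have {}Eq : odd (i %/ n) = odd (j %/ n) by case: (odd _) (odd _) Eq => [] [].
  by apply/ffunP=> t; rewrite !ffunE Eq Er.
have n1_lt : (n.-1 < n)%N by rewrite (prednK n_gt0).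
have Eq : odd (i %/ n) = odd (j %/ n).
  have last_coord m : (n.-1 < m %% n)%N = false.
    by rewrite ltnNge -ltnS (prednK n_gt0) lt_r.
  by move/ffunP: Eij => /(_ (Ordinal n1_lt)); rewrite !ffunE /= !last_coord !addbF.
have Er : (i %% n = j %% n)%N.
  have coord t : (t < i %% n)%N = (t < j %% n)%N.
    case: (ltnP t n) => [lt_t|le_t]; last first.
      have le_r m : (m %% n <= t)%N := leq_trans (ltnW (lt_r m)) le_t.
      by rewrite (leq_gtF (le_r i)) (leq_gtF (le_r j)).
    by move/ffunP: Eij => /(_ (Ordinal lt_t)); rewrite !ffunE Eq => /addbI.
  by apply/eqP; rewrite eqn_leq leqNgt coord ltnn leqNgt -coord ltnn.
by rewrite Eq Er.
Qed.

Lemma azpart_eq i j : (azpart i == azpart j) = (i %% (2 * n) == j %% (2 * n))%N.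
Proof. by rewrite !azpart_comb (inj_eq comb_inj) azpart_coords_eq. Qed.

Lemma expaz_eq1 m : ((a * z) ^+ m == 1) = (n * lam %| m)%N && (2 * n %| m)%N.
Proof.
have azpart_eq1 : (azpart m == 1) = (2 * n %| m)%N.
  by rewrite -[1]/(azpart 0) azpart_eq mod0n.
rewrite expaz -oa order_dvdn -azpart_eq1; apply/eqP/andP => [E|[/eqP-> /eqP->]].
  have [-> ->] := @expa_mulN_inj m 0 _ 1 (azpartN m) (group1 N) (etrans E (esym (mulg1 _))).
  by rewrite !eqxx.
by rewrite mulg1.
Qed.

Lemma order_az : #[a * z] = (2 * n * lam %/ gcdn 2 lam)%N.
Proof.
rewrite -lcmn_mul_mul2; apply/eqP; rewrite eqn_dvd dvdn_lcm -expaz_eq1 -order_dvdn dvdnn.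
by rewrite order_dvdn expaz_eq1 -!dvdn_lcm dvdnn.
Qed.

Local Notation mu := (lam %/ gcdn 2 lam)%N.

Lemma mu_gt0 : (0 < mu)%N.
Proof. by rewrite divn_gt0 ?gcdn_gt0 ?lam_gt0 ?orbT // dvdn_leq // dvdn_gcdr. Qed.

Lemma order_az_mu : #[a * z] = (2 * n * mu)%N.
Proof. by rewrite order_az muln_divA // dvdn_gcdr. Qed.

Lemma n2_gt0 : (0 < 2 * n)%N. Proof. by rewrite muln_gt0 n_gt0. Qed.

Section Face.
Variables (k : nat) (w : gT).
Hypothesis wN : w \in N.
Local Notation g := (a ^+ k * w).

Definition face_rep i := azpart i ^ (a ^+ k) * w.

Lemma face_repN i : face_rep i \in N.
Proof. by rewrite groupM // memJ_norm ?azpartN ?expa_norm. Qed.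

Lemma expaz_mul_g i : (a * z) ^+ i * g = a ^+ (i + k) * face_rep i.
Proof.
rewrite expaz expgD -!mulgA; congr (_ * _).
by rewrite /face_rep (mulgA (azpart i)) (conjgC (azpart i)) -mulgA.
Qed.

Lemma v_face_rep i : v (i + k) * face_rep i = face_rep i.+1.
Proof. by rewrite /face_rep /v expgD conjgM mulgA -conjMg. Qed.

Lemma face_rep_eq i j : (face_rep i == face_rep j) = (i %% (2 * n) == j %% (2 * n))%N.
Proof. by rewrite (inj_eq (mulIg w)) (inj_eq (conjg_inj _)) azpart_eq. Qed.

Definition face_vertex i := K :* ((a * z) ^+ i * g).
Definition face_edge i := Z :* ((a * z) ^+ i * g).

Lemma face_vertex_rep i : face_vertex i = K :* face_rep i.
Proof. by rewrite /face_vertex expaz_mul_g Kcoset_expa. Qed.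

Lemma face_edge_rep i : face_edge i = Z :* (a ^+ (i + k) * face_rep i).
Proof. by rewrite /face_edge expaz_mul_g. Qed.

Lemma face_vertex_in i : face_vertex i \in rm_vertices X a.
Proof. by rewrite face_vertex_rep Kcoset_in ?face_repN. Qed.

Lemma face_edge_in i : face_edge i \in rm_edges X z.
Proof. by rewrite face_edge_rep zcoset_in ?face_repN. Qed.

Lemma face_vertex_eq i j :
  (face_vertex i == face_vertex j) = (i %% (2 * n) == j %% (2 * n))%N.
Proof. by rewrite !face_vertex_rep (inj_in_eq Kcoset_inj) ?face_repN ?face_rep_eq. Qed.

Lemma rm_inc_face_vertex_edge i m : rm_inc (face_vertex i) (face_edge m) =
  (i %% (2 * n) == m %% (2 * n))%N || (i %% (2 * n) == m.+1 %% (2 * n))%N.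
Proof.
rewrite face_vertex_rep face_edge_rep rm_inc_Kcoset_zcoset ?face_repN //.
by rewrite v_face_rep !face_rep_eq.
Qed.

Lemma face_edge_inj m m' : (m < #[a * z])%N -> (m' < #[a * z])%N ->
  face_edge m = face_edge m' -> m = m'.
Proof.
move=> lt_m lt_m'; rewrite !face_edge_rep => /zcoset_eq[]; rewrite ?face_repN //.
rewrite !expgD => /mulIg Ea [|]; last first.
  (* then m = m' and m = m' + 1 modulo n, which is absurd as n > 1 *)
  rewrite v_face_rep => /eqP; rewrite face_rep_eq => /eqP/(congr1 (modn^~ n)) /=.
  rewrite !modn_dvdm ?dvdn_mull // -(modn_dvdm m (dvdn_mulr lam (dvdnn n))) -oa.
  move/eqP: Ea; rewrite eq_expg_mod_order => /eqP-> /eqP.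
  rewrite oa modn_dvdm ?dvdn_mulr // -addn1 -{1}[m']addn0 eqn_modDl mod0n modn_small //.
  exact: leq_trans n_ge3.
move/eqP; rewrite face_rep_eq -azpart_eq => /eqP Eaz.
by apply/eqP; rewrite -(modn_small lt_m) -(modn_small lt_m') -eq_expg_mod_order !expaz Ea Eaz.
Qed.

Lemma face_regular : regular_seq (face_vertex_seq a z g).
Proof.
rewrite /face_vertex_seq order_az_mu.
apply: (@regular_seq_periodic _ face_vertex); rewrite ?n2_gt0 ?mu_gt0 //.
  by move=> i; apply/eqP; rewrite face_vertex_eq modnDr.
rewrite map_inj_in_uniq ?iota_uniq // => i j; rewrite !mem_iota !add0n => lt_i lt_j.
by move/eqP; rewrite face_vertex_eq !modn_small // => /eqP.
Qed.

Lemma mem_face_edge_seq E :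
  (E \in face_edge_seq a z g) = [exists m : 'I_#[a * z], E == face_edge m].
Proof.
apply/mapP/existsP => [[m]|[m /eqP->]]; last by exists (val m); rewrite // mem_iota ltn_ord.
by rewrite mem_iota add0n => lt_m ->; exists (Ordinal lt_m).
Qed.

Definition face_cycle_edge (p : 'I_(2 * n) * 'I_mu) := face_edge (p.1 + 2 * n * p.2).

Lemma face_cycle_edge_lt (p : 'I_(2 * n) * 'I_mu) : (p.1 + 2 * n * p.2 < #[a * z])%N.
Proof. by rewrite order_az_mu add_mul_ord_lt. Qed.

Lemma face_vertex_set : [set V in rm_vertices X a |
    [exists E in rm_edges X z, (E \in face_edge_seq a z g) && rm_inc V E]]
  = [set face_vertex (i : 'I_(2 * n)) | i in [set: 'I_(2 * n)]].
Proof.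
apply/setP=> V; apply/idP/imsetP => [|[i _ ->]]; last first.
  have lt_i : (i < #[a * z])%N.
    by apply: leq_trans (face_cycle_edge_lt (i, Ordinal mu_gt0)); rewrite leq_addr.
  rewrite inE face_vertex_in /=; apply/existsP; exists (face_edge i).
  rewrite face_edge_in mem_face_edge_seq rm_inc_face_vertex_edge eqxx andbT.
  by apply/existsP; exists (Ordinal lt_i).
rewrite inE => /andP[/vertexP[w0 w0N ->] /existsP[E /and3P[_]]].
rewrite mem_face_edge_seq => /existsP[m /eqP->].
rewrite face_edge_rep rm_inc_Kcoset_zcoset ?face_repN // v_face_rep.
have face_vertex_mod i : face_vertex i = face_vertex (i %% (2 * n)).
  by apply/eqP; rewrite face_vertex_eq modn_mod.
case/orP=> /eqP->; rewrite -face_vertex_rep face_vertex_mod.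
- by exists (Ordinal (ltn_pmod m n2_gt0)).
- by exists (Ordinal (ltn_pmod m.+1 n2_gt0)).
Qed.

Lemma face_edge_set : [set E in rm_edges X z | E \in face_edge_seq a z g]
  = [set face_cycle_edge p | p in [set: 'I_(2 * n) * 'I_mu]].
Proof.
apply/setP=> E; apply/idP/imsetP => [|[p _ ->]]; last first.
  rewrite inE face_edge_in mem_face_edge_seq /=; apply/existsP.
  by exists (Ordinal (face_cycle_edge_lt p)).
rewrite inE mem_face_edge_seq => /andP[_ /existsP[[m lt_m] /eqP->]].
have /add_mul_ordP[i [j Em]] : (m < 2 * n * mu)%N by rewrite -order_az_mu.
by exists (i, j); rewrite // /face_cycle_edge -Em.
Qed.

Lemma face_cycle_edge_inj : injective face_cycle_edge.
Proof.
move=> [i j] [i' j'] /face_edge_inj Eij.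
have lt_ij := face_cycle_edge_lt (i, j); have lt_ij' := face_cycle_edge_lt (i', j').
by have /= [-> ->] := add_mul_ord_inj (Eij lt_ij lt_ij').
Qed.

Lemma rm_inc_face_cycle (i : 'I_(2 * n)) p :
  rm_inc (face_vertex i) (face_cycle_edge p) = cycleC_inc i p.
Proof.
rewrite rm_inc_face_vertex_edge /cycleC_inc modn_small // add_mul_ord_modn.
by rewrite -addSn (addnC p.1.+1) (mulnC (2 * n)%N) modnMDl.
Qed.

Lemma face_cycle_iso : mg_iso
  [set V in rm_vertices X a |
     [exists E in rm_edges X z, (E \in face_edge_seq a z g) && rm_inc V E]]
  [set E in rm_edges X z | E \in face_edge_seq a z g] (@rm_inc gT)
  [set: 'I_(2 * n)] [set: 'I_(2 * n) * 'I_mu] (@cycleC_inc (2 * n) mu).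
Proof.
have i0 : 'I_(2 * n) := Ordinal n2_gt0.
apply: (mg_iso_sym i0 (i0, Ordinal mu_gt0)).
exists (fun i : 'I_(2 * n) => face_vertex i), face_cycle_edge; split.
- move=> i j _ _ /eqP; rewrite face_vertex_eq !modn_small // => /eqP; exact: val_inj.
- by rewrite face_vertex_set.
- by move=> p q _ _ /face_cycle_edge_inj.
- by rewrite face_edge_set.
- by move=> i p _ _; apply: rm_inc_face_cycle.
Qed.

End Face.

Lemma rm_face_cycles : {in X, forall g,
  regular_seq (face_vertex_seq a z g) /\
  mg_iso [set V in rm_vertices X a |
            [exists E in rm_edges X z, (E \in face_edge_seq a z g) && rm_inc V E]]
         [set E in rm_edges X z | E \in face_edge_seq a z g] (@rm_inc gT)
         [set: 'I_(2 * n)] [set: 'I_(2 * n) * 'I_mu] (@cycleC_inc (2 * n) mu)}.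
Proof.
by move=> g /mem_X_decomp[k [w [_ wN ->]]]; split; [apply: face_regular | apply: face_cycle_iso].
Qed.

End CubeGroup.

Theorem lemma6p4 (gT : finGroupType) (n lam : nat) (X N : {group gT}) (a z : gT) :
  (3 <= n)%N -> (1 <= lam)%N ->
  N ><| <[a]> = X ->
  2.-abelem N ->
  N :=: <<[set z ^ (a ^+ i) | i : 'I_n]>> ->
  #|N| = (2 ^ n)%N ->
  #[a] = (n * lam)%N ->
  z ^ (a ^+ n) = z ->
  let mu := (lam %/ gcdn 2 lam)%N in
  rm_X_rotary X a z /\
  [/\
      mg_iso (rm_vertices X a) (rm_edges X z) (@rm_inc gT)
             [set: {ffun 'I_n -> bool}] (cubeQ_edges n lam) (@cubeQ_inc n lam),
      {in rm_vertices X a, forall V, #|rm_neighbours X a z V| = n},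
      {in rm_vertices X a, forall V, {in rm_neighbours X a z V, forall W,
          rm_mult X z V W = lam}},
      #[a * z] = (2 * n * lam %/ gcdn 2 lam)%N &
      {in X, forall g,
         regular_seq (face_vertex_seq a z g) /\
         mg_iso [set V in rm_vertices X a |
                   [exists E in rm_edges X z, (E \in face_edge_seq a z g) && rm_inc V E]]
                [set E in rm_edges X z | E \in face_edge_seq a z g] (@rm_inc gT)
                [set: 'I_(2 * n)] [set: 'I_(2 * n) * 'I_mu] (@cycleC_inc (2 * n) mu)}].
Proof.
move=> n_ge3 lam_gt0 defX abelN genN oN oa z_an mu.
split; first exact: rm_X_rotary_rcosets (aX defX) (zX n_ge3 defX genN).
split.
- exact: rm_iso_cube n_ge3 lam_gt0 defX abelN genN oN oa z_an.
- exact: rm_valency n_ge3 defX abelN genN oN oa z_an.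
- exact: rm_edge_multiplicity n_ge3 defX abelN genN oN oa z_an.
- exact: order_az n_ge3 defX abelN genN oN oa z_an.
- exact: rm_face_cycles n_ge3 lam_gt0 defX abelN genN oN oa z_an.
Qed.
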